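(* Let $Q$ be an equivariantly supported quantale with base locale $Q_0$ and support $\varsigma$. Then the map $Q_0\to R(Q)$ defined by $a\mapsto a\triangleright1_Q$ is an order isomorphism whose inverse is the restriction $\varsigma:R(Q)\to Q_0$. In particular, $R(Q)$ is a locale.
   Context: For a locale $A$, an $A$-$A$-bimodule is a sup-lattice $M$ with actions $a\triangleright m$, $m\triangleleft a$ preserving joins in each variable, with $1_A\triangleright m=m$, $(a\wedge b)\triangleright m=a\triangleright(b\triangleright m)$, $m\triangleleft1_A=m$, $m\triangleleft(a\wedge b)=(m\triangleleft a)\triangleleft b$, $(a\triangleright m)\triangleleft b=a\triangleright(m\triangleleft b)$. An $A$-$A$-quantale is such a $Q$ with associative join-preserving multiplication and $(a\triangleright x)y=a\triangleright(xy)$, $(x\triangleleft a)y=x(a\triangleright y)$, $(xy)\triangleleft a=x(y\triangleleft a)$; involutive if there is a join-preserving $x\mapsto x^*$ with $x^{**}=x$, $(xy)^*=y^*x^*$, $(a\triangleright(x\triangleleft b))^*=b\triangleright(x^*\triangleleft a)$. A based quantale is an involutive $Q_0$-$Q_0$-quantale for some locale $Q_0$; $1_Q$ is its top. A support is a join-preserving $\varsigma:Q\to Q_0$ with $\varsigma(1_Q)=1_{Q_0}$, $\varsigma(x)\triangleright y\le xx^*y$, $\varsigma(x)\triangleright x=x$; equivariant if $\varsigma(a\triangleright x)=a\wedge\varsigma(x)$. An equivariantly supported quantale is a based quantale with an equivariant support. $R(Q)=\{x\in Q\mid x1_Q\le x\}$ is the set of right-sided elements. *)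

Set Implicit Arguments.
Unset Strict Implicit.

Definition image {X Y : Type} (f : X -> Y) (S : X -> Prop) : Y -> Prop :=
  fun y => exists x, S x /\ y = f x.

Definition is_sup_lattice {T : Type} (le : T -> T -> Prop)
  (sup : (T -> Prop) -> T) : Prop :=
  (forall x, le x x) /\
  (forall x y z, le x y -> le y z -> le x z) /\
  (forall x y, le x y -> le y x -> x = y) /\
  (forall S x, S x -> le x (sup S)) /\
  (forall S y, (forall x, S x -> le x y) -> le (sup S) y).

Definition is_locale {T : Type} (le : T -> T -> Prop)
  (sup : (T -> Prop) -> T) (meet : T -> T -> T) : Prop :=
  is_sup_lattice le sup /\
  (forall a b, le (meet a b) a) /\
  (forall a b, le (meet a b) b) /\
  (forall a b c, le c a -> le c b -> le c (meet a b)) /\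
  (forall a S, meet a (sup S) = sup (image (meet a) S)).

Record Locale := {
  Lcar :> Type;
  Lle : Lcar -> Lcar -> Prop;
  Lsup : (Lcar -> Prop) -> Lcar;
  Lmeet : Lcar -> Lcar -> Lcar;
  Lax : is_locale Lle Lsup Lmeet }.

Definition Ltop (A : Locale) : A := Lsup (fun _ => True).

(* A based quantale: an involutive A-A-quantale for the locale A = Q_0. *)
Record BasedQuantale (A : Locale) := {
  Qcar :> Type;
  Qle : Qcar -> Qcar -> Prop;
  Qsup : (Qcar -> Prop) -> Qcar;
  Qsl : is_sup_lattice Qle Qsup;
  lact : A -> Qcar -> Qcar;
  ract : Qcar -> A -> Qcar;
  mul : Qcar -> Qcar -> Qcar;
  star : Qcar -> Qcar;
  lact_supl : forall (S : A -> Prop) m,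
      lact (Lsup S) m = Qsup (image (fun a => lact a m) S);
  lact_supr : forall a (S : Qcar -> Prop),
      lact a (Qsup S) = Qsup (image (lact a) S);
  ract_supl : forall (S : Qcar -> Prop) a,
      ract (Qsup S) a = Qsup (image (fun m => ract m a) S);
  ract_supr : forall m (S : A -> Prop),
      ract m (Lsup S) = Qsup (image (ract m) S);
  lact_one : forall m, lact (Ltop A) m = m;
  lact_meet : forall a b m, lact (Lmeet a b) m = lact a (lact b m);
  ract_one : forall m, ract m (Ltop A) = m;
  ract_meet : forall a b m, ract m (Lmeet a b) = ract (ract m a) b;
  lact_ract : forall a b m, ract (lact a m) b = lact a (ract m b);
  mulA : forall x y z, mul (mul x y) z = mul x (mul y z);
  mul_supl : forall (S : Qcar -> Prop) y,
      mul (Qsup S) y = Qsup (image (fun x => mul x y) S);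
  mul_supr : forall x (S : Qcar -> Prop),
      mul x (Qsup S) = Qsup (image (mul x) S);
  mul_lact : forall a x y, mul (lact a x) y = lact a (mul x y);
  mul_ract_lact : forall a x y, mul (ract x a) y = mul x (lact a y);
  mul_ract : forall a x y, ract (mul x y) a = mul x (ract y a);
  star_sup : forall (S : Qcar -> Prop), star (Qsup S) = Qsup (image star S);
  starK : forall x, star (star x) = x;
  star_mul : forall x y, star (mul x y) = mul (star y) (star x);
  star_act : forall a b x,
      star (lact a (ract x b)) = lact b (ract (star x) a) }.

Definition Qtop (A : Locale) (Q : BasedQuantale A) : Q := Qsup (fun _ => True).

Definition is_support (A : Locale) (Q : BasedQuantale A) (s : Q -> A) : Prop :=
  (forall S : Q -> Prop, s (Qsup S) = Lsup (image s S)) /\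
  s (Qtop Q) = Ltop A /\
  (forall x y, Qle (lact (s x) y) (mul (mul x (star x)) y)) /\
  (forall x, lact (s x) x = x).

Definition is_equivariant (A : Locale) (Q : BasedQuantale A) (s : Q -> A) : Prop :=
  forall a x, s (lact a x) = Lmeet a (s x).

Definition right_sided (A : Locale) (Q : BasedQuantale A) (x : Q) : Prop :=
  Qle (mul x (Qtop Q)) x.

(** The support is join-preserving, hence monotone, and equivariance together
    with [s 1 = 1] gives [s (a |> 1) = a]; so [a |-> a |> 1] is an order
    embedding of [Q_0] into [Q], landing in [R(Q)] because
    [(a |> 1) 1 = a |> (1 1) <= a |> 1].  Conversely, for right-sided [x] the
    support axioms squeeze [x = s x |> x <= s x |> 1 <= x x^* 1 <= x 1 <= x].
    Hence [a |-> a |> 1] and [s] are mutually inverse order isomorphisms between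
    [Q_0] and [R(Q)], and the locale structure of [Q_0] transports to [R(Q)]. *)

From Stdlib Require Import ProofIrrelevance FunctionalExtensionality PropExtensionality.

Lemma image_comp {X Y Z : Type} (f : Y -> Z) (g : X -> Y) (S : X -> Prop) :
  image f (image g S) = image (fun x => f (g x)) S.
Proof.
  apply functional_extensionality; intro z; apply propositional_extensionality.
  split.
  - intros [y [[x [Sx ->]] ->]]. exists x. auto.
  - intros [x [Sx ->]]. exists (g x). split; [exists x|]; auto.
Qed.

Lemma sup_preserving_monotone {T U : Type} {leT : T -> T -> Prop} {supT}
    {leU : U -> U -> Prop} {supU} (h : T -> U) :
  is_sup_lattice leT supT -> is_sup_lattice leU supU ->
  (forall S, h (supT S) = supU (image h S)) ->
  forall x y, leT x y -> leU (h x) (h y).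
Proof.
  intros [reflT [_ [antisymT [ubT lubT]]]] [_ [_ [_ [ubU _]]]] h_sup x y Hxy.
  assert (sup_xy : supT (fun z => z = x \/ z = y) = y).
  { apply antisymT.
    - apply lubT. intros z [-> | ->]; auto.
    - apply ubT. auto. }
  rewrite <- sup_xy, h_sup. apply ubU. exists x. auto.
Qed.

Lemma Lmeet_top (A : Locale) (a : A) : Lmeet a (Ltop A) = a.
Proof.
  destruct (Lax A) as [[refl [_ [antisym [ub _]]]] [meet_l [_ [meet_glb _]]]].
  apply antisym; auto.
  apply meet_glb; auto. apply ub. exact I.
Qed.

Lemma is_locale_transfer {T : Type} (A : Locale) (le : T -> T -> Prop)
    (f : A -> T) (g : T -> A) :
  (forall a, g (f a) = a) -> (forall t, f (g t) = t) ->
  (forall x y, le x y <-> Lle (g x) (g y)) ->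
  is_locale le (fun S => f (Lsup (image g S))) (fun x y => f (Lmeet (g x) (g y))).
Proof.
  intros gf fg le_g.
  destruct (Lax A) as [[refl [trans [antisym [ub lub]]]]
                       [meet_l [meet_r [meet_glb meet_sup]]]].
  split; [split; [|split; [|split; [|split]]] | split; [|split; [|split]]].
  - intros x. apply le_g, refl.
  - intros x y z Hxy Hyz. apply le_g in Hxy, Hyz. apply le_g. eauto.
  - intros x y Hxy Hyx. apply le_g in Hxy, Hyx.
    rewrite <- (fg x), <- (fg y), (antisym _ _ Hxy Hyx). reflexivity.
  - intros S x Sx. apply le_g. rewrite gf. apply ub. exists x. auto.
  - intros S y Hy. apply le_g. rewrite gf. apply lub.
    intros z [x [Sx ->]]. apply le_g, Hy, Sx.
  - intros x y. apply le_g. rewrite gf. apply meet_l.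
  - intros x y. apply le_g. rewrite gf. apply meet_r.
  - intros x y z Hzx Hzy. apply le_g in Hzx, Hzy. apply le_g. rewrite gf. auto.
  - intros x S. rewrite gf, meet_sup, !image_comp.
    replace (fun z => g (f (Lmeet (g x) (g z)))) with (fun z => Lmeet (g x) (g z));
      [reflexivity|].
    apply functional_extensionality; intro z. rewrite gf. reflexivity.
Qed.

Section BasedQuantaleOrder.

Context {A : Locale} (Q : BasedQuantale A).

Lemma Qle_top (x : Q) : Qle x (Qtop Q).
Proof. destruct (Qsl Q) as [_ [_ [_ [ub _]]]]. apply ub. exact I. Qed.

Lemma lact_monotone_r (a : A) (x y : Q) : Qle x y -> Qle (lact a x) (lact a y).
Proof.
  apply (sup_preserving_monotone (lact a) (Qsl Q) (Qsl Q)). apply lact_supr.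
Qed.

Lemma lact_monotone_l (x : Q) (a b : A) : Lle a b -> Qle (lact a x) (lact b x).
Proof.
  apply (sup_preserving_monotone (fun a => lact a x) (proj1 (Lax A)) (Qsl Q)).
  intros S. apply lact_supl.
Qed.

Lemma mul_monotone_r (x y z : Q) : Qle y z -> Qle (mul x y) (mul x z).
Proof.
  apply (sup_preserving_monotone (mul x) (Qsl Q) (Qsl Q)). apply mul_supr.
Qed.

Lemma right_sided_lact_top (a : A) : right_sided (lact a (Qtop Q)).
Proof.
  unfold right_sided. rewrite mul_lact. apply lact_monotone_r, Qle_top.
Qed.

End BasedQuantaleOrder.

Section EquivariantSupport.

Context {A : Locale} {Q : BasedQuantale A} {s : Q -> A}.
Hypotheses (Hs : is_support s) (He : is_equivariant s).

Lemma support_monotone (x y : Q) : Qle x y -> Lle (s x) (s y).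
Proof.
  apply (sup_preserving_monotone s (Qsl Q) (proj1 (Lax A))). apply (proj1 Hs).
Qed.

Lemma support_lact_top (a : A) : s (lact a (Qtop Q)) = a.
Proof.
  destruct Hs as [_ [s_top _]]. rewrite He, s_top. apply Lmeet_top.
Qed.

Lemma lact_top_le (a b : A) :
  Lle a b <-> Qle (lact a (Qtop Q)) (lact b (Qtop Q)).
Proof.
  split; intros Hab.
  - apply lact_monotone_l, Hab.
  - rewrite <- (support_lact_top a), <- (support_lact_top b).
    apply support_monotone, Hab.
Qed.

Lemma lact_support_top (x : Q) : right_sided x -> lact (s x) (Qtop Q) = x.
Proof.
  intros Hx. destruct Hs as [_ [_ [s_mul s_fix]]].
  destruct (Qsl Q) as [_ [trans [antisym _]]].
  apply antisym.
  - apply (trans _ _ _ (s_mul x (Qtop Q))). rewrite mulA.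
    apply (trans _ (mul x (Qtop Q))); [|exact Hx].
    apply mul_monotone_r, Qle_top.
  - rewrite <- (s_fix x) at 1. apply lact_monotone_r, Qle_top.
Qed.

Lemma right_sided_locale :
  exists (supR : ({x : Q | right_sided x} -> Prop) -> {x : Q | right_sided x})
         (meetR : {x : Q | right_sided x} -> {x : Q | right_sided x} ->
                  {x : Q | right_sided x}),
    is_locale (fun x y => Qle (proj1_sig x) (proj1_sig y)) supR meetR.
Proof.
  pose (f (a : A) := exist (@right_sided A Q) (lact a (Qtop Q)) (right_sided_lact_top Q a)).
  pose (g (x : {x : Q | right_sided x}) := s (proj1_sig x)).
  eexists. eexists. apply (is_locale_transfer A _ f g).
  - intros a. apply support_lact_top.
  - intros [x Hx]. apply eq_sig_hprop; [intros; apply proof_irrelevance|].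
    apply lact_support_top, Hx.
  - intros [x Hx] [y Hy]. unfold g; simpl.
    rewrite lact_top_le, !lact_support_top by assumption. reflexivity.
Qed.

End EquivariantSupport.

Theorem corollary3p18 (A : Locale) (Q : BasedQuantale A) (s : Q -> A)
  (Hs : is_support s) (He : is_equivariant s) :
  (* a |-> a |> 1_Q maps Q_0 into R(Q) *)
  (forall a : A, right_sided (lact a (Qtop Q))) /\
  (* it is an order embedding *)
  (forall a b : A, Lle a b <-> Qle (lact a (Qtop Q)) (lact b (Qtop Q))) /\
  (* the restriction of s to R(Q) is its two-sided inverse *)
  (forall a : A, s (lact a (Qtop Q)) = a) /\
  (forall x : Q, right_sided x -> lact (s x) (Qtop Q) = x) /\
  (* in particular R(Q), with the order induced from Q, is a locale *)
  (exists (supR : ({x : Q | right_sided x} -> Prop) -> {x : Q | right_sided x})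
          (meetR : {x : Q | right_sided x} -> {x : Q | right_sided x} ->
                   {x : Q | right_sided x}),
     is_locale (fun x y => Qle (proj1_sig x) (proj1_sig y)) supR meetR).
Proof.
  split; [exact (right_sided_lact_top Q)|].
  split; [exact (lact_top_le Hs He)|].
  split; [exact (support_lact_top Hs He)|].
  split; [exact (lact_support_top Hs)|].
  exact (right_sided_locale Hs He).
Qed.
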